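(* Let $(\mathcal M,\mathrm d_{\mathcal M})$ be a metric space with finite doubling constant $\lambda$ and doubling dimension $d_{\mathcal M}=\log_2\lambda$. There is a constant $c>0$ depending only on $\lambda$ such that the following holds. Let $\alpha\ge 2$, $\epsilon\in(0,1)$, $k,m\ge1$, let $X\in\mathcal M^m$, and let $X_k\in\mathcal M^k$ be an $\alpha$-approximate $k$-simplification of $X$. Then there exists a finite set $\mathcal C\subset\mathcal M^k$ with \[ |\mathcal C|\le\Big(c\,k\,\log_2\!\big(\tfrac{\alpha}{\epsilon}\big)\big(\tfrac{\alpha}{\epsilon}\big)^{d_{\mathcal M}}\Big)^k \] such that for every $q\in\mathcal M^k$ with $\epsilon\,\mathrm d_{dF}(X,X_k)\le\mathrm d_{dF}(q,X)\le\frac1\epsilon\,\mathrm d_{dF}(X,X_k)$ there is $\bar X\in\mathcal C$ with $\mathrm d_{dF}(q,\bar X)\le\epsilon\,\mathrm d_{dF}(q,X)$.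
   Context: A curve of complexity $m$ in a metric space $(\mathcal M,\mathrm d_{\mathcal M})$ is a sequence $p=p_1,\dots,p_m$ of points of $\mathcal M$; $\mathcal M^m$ denotes the set of such curves. For $p\in\mathcal M^m$ and $q\in\mathcal M^k$, a traversal of $p$ and $q$ is a sequence of index pairs $(i_1,j_1),\dots,(i_t,j_t)$ with $(i_1,j_1)=(1,1)$, $(i_t,j_t)=(m,k)$, and for every $u<t$: $i_{u+1}-i_u\in\{0,1\}$, $j_{u+1}-j_u\in\{0,1\}$ and $(i_{u+1}-i_u)+(j_{u+1}-j_u)\ge 1$. Its cost is $\max_u \mathrm d_{\mathcal M}(p_{i_u},q_{j_u})$. The discrete Fréchet distance $\mathrm d_{dF}(p,q)$ is the minimum cost over all traversals of $p$ and $q$. For $p\in\mathcal M^m$ and $\alpha\ge 1$, a curve $p'\in\mathcal M^k$ is an $\alpha$-approximate $k$-simplification of $p$ if $\mathrm d_{dF}(p,p')\le\alpha\,\mathrm d_{dF}(p,q)$ for every $q\in\mathcal M^k$. The doubling constant $\lambda$ of $\mathcal M$ is the smallest integer such that every closed ball of radius $r>0$ can be covered by at most $\lambda$ closed balls of radius $r/2$ centered at points of $\mathcal M$. *)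

From Stdlib Require Import Reals List ClassicalEpsilon.
Import ListNotations.
Open Scope R_scope.

Record MetricSpace := {
  pt :> Type;
  dist : pt -> pt -> R;
  dist_refl : forall x, dist x x = 0;
  dist_sep : forall x y, dist x y = 0 -> x = y;
  dist_sym : forall x y, dist x y = dist y x;
  dist_tri : forall x y z, dist x z <= dist x y + dist y z
}.

(* A curve of complexity m in M is a list of points of length m.
   Indices are 0-based: p_1 ... p_m of the paper are nth 0 ... nth (m-1). *)

Definition trav_step (a b : nat * nat) : Prop :=
  let (i, j) := a in let (i', j') := b in
  (i' = i \/ i' = S i) /\ (j' = j \/ j' = S j) /\ (i, j) <> (i', j').

Definition is_traversal (m k : nat) (t : list (nat * nat)) : Prop :=
  t <> [] /\
  nth 0 t (0%nat, 0%nat) = (0%nat, 0%nat) /\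
  nth (length t - 1) t (0%nat, 0%nat) = ((m - 1)%nat, (k - 1)%nat) /\
  (forall u, (S u < length t)%nat ->
     trav_step (nth u t (0%nat, 0%nat)) (nth (S u) t (0%nat, 0%nat))).

(* Distance between p_i and q_j (indices are always in range for traversals). *)
Definition pair_dist {M : MetricSpace} (p q : list M) (ij : nat * nat) : R :=
  match nth_error p (fst ij), nth_error q (snd ij) with
  | Some x, Some y => dist M x y
  | _, _ => 0
  end.

Definition trav_cost {M : MetricSpace} (p q : list M) (t : list (nat * nat)) : R :=
  fold_right Rmax 0 (map (pair_dist p q) t).

Definition is_dF {M : MetricSpace} (p q : list M) (r : R) : Prop :=
  (exists t, is_traversal (length p) (length q) t /\ trav_cost p q t = r) /\
  (forall t, is_traversal (length p) (length q) t -> r <= trav_cost p q t).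

(* Discrete Frechet distance (the minimum exists for nonempty curves). *)
Definition dF {M : MetricSpace} (p q : list M) : R :=
  epsilon (inhabits 0) (fun r => is_dF p q r).

Definition approx_simplification {M : MetricSpace} (alpha : R) (k : nat)
    (p p' : list M) : Prop :=
  length p' = k /\
  forall q : list M, length q = k -> dF p p' <= alpha * dF p q.

Definition doubling_cover (M : MetricSpace) (n : nat) : Prop :=
  forall (x : M) (r : R), 0 < r ->
    exists centers : list M, (length centers <= n)%nat /\
      forall y : M, dist M x y <= r ->
        exists c, In c centers /\ dist M c y <= r / 2.

Definition doubling_constant (M : MetricSpace) (lam : nat) : Prop :=
  doubling_cover M lam /\ forall n, doubling_cover M n -> (lam <= n)%nat.

Definition log2 (x : R) : R := ln x / ln 2.

From Pilot Require Import Defs.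
From Stdlib Require Import Reals List.
From Stdlib Require Import Lra Lia Classical ClassicalEpsilon.
Import ListNotations.
Open Scope R_scope.

(* Write dS = dF X Xk and let q be a curve of complexity k with
   r = dF q X in [eps dS, dS / eps].  Since Xk is an alpha-approximate
   simplification, dS <= alpha r, and every vertex of q is within r + dS
   <= (1 + alpha) r of a vertex of Xk (chain the vertex matchings given by
   optimal traversals).  Cut [dS / alpha, dS / eps] into N ~ log2 (alpha / eps)
   dyadic bands; in each band, n ~ log2 (2 (1 + alpha) / eps) applications of
   the doubling property cover the balls of radius (1 + alpha) 2^(i+1) dS / alpha
   around the k vertices of Xk by k lam^n balls of radius eps 2^i dS / alpha.
   The union P of these centres (at most k + (N + 1) k lam^n points) approximates
   every vertex of q within eps r; snapping q vertexwise to P gives a curve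
   within Frechet distance eps r (diagonal traversal), so the candidate set C of
   all curves with k vertices in P works, and |C| <= |P|^k.  Finally
   lam^n = (2^n)^(log2 lam) <= (6 alpha / eps)^(log2 lam). *)

Notation origin := (0%nat, 0%nat).

Lemma fold_Rmax_nonneg (l : list R) : 0 <= fold_right Rmax 0 l.
Proof.
  induction l as [|x l IH]; simpl; [lra|].
  eapply Rle_trans; [exact IH | apply Rmax_r].
Qed.

Lemma fold_Rmax_ge (l : list R) (x : R) : In x l -> x <= fold_right Rmax 0 l.
Proof.
  induction l as [|y l IH]; simpl; intros Hx; [contradiction|].
  destruct Hx as [<- | Hx]; [apply Rmax_l|].
  eapply Rle_trans; [apply IH, Hx | apply Rmax_r].
Qed.

Lemma fold_Rmax_le (l : list R) (B : R) :
  0 <= B -> (forall x, In x l -> x <= B) -> fold_right Rmax 0 l <= B.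
Proof.
  induction l as [|x l IH]; simpl; intros HB Hl; [lra|].
  apply Rmax_lub; [apply Hl | apply IH]; auto.
Qed.

(* The maximum of [l] is one of the values [0 :: l]; stated relative to any
   list [V] containing them, so that it can serve for the finiteness argument
   behind the existence of the Frechet distance. *)
Lemma fold_Rmax_in (l V : list R) :
  In 0 V -> (forall x, In x l -> In x V) -> In (fold_right Rmax 0 l) V.
Proof.
  induction l as [|x l IH]; simpl; intros H0 Hl; auto.
  apply Rmax_case; [apply Hl | apply IH]; auto.
Qed.

Lemma list_min (V : list R) (P : R -> Prop) :
  (exists v, In v V /\ P v) -> exists v, P v /\ forall w, In w V -> P w -> v <= w.
Proof.
  induction V as [|a V IH]; intros [v [Hv HP]]; [destruct Hv|].
  destruct (classic (exists v, In v V /\ P v)) as [Hex | Hno].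
  - destruct (IH Hex) as [v' [HP' Hmin]].
    destruct (classic (P a /\ a <= v')) as [[Ha Hav] | Ha].
    + exists a; split; auto.
      intros w [<- | Hw] Pw; [lra | specialize (Hmin w Hw Pw); lra].
    + exists v'; split; auto.
      intros w [<- | Hw] Pw; [| exact (Hmin w Hw Pw)].
      apply Rnot_lt_le; intro Hlt; apply Ha; split; [exact Pw | lra].
  - destruct Hv as [<- | Hv]; [| exfalso; eauto].
    exists a; split; auto.
    intros w [<- | Hw] Pw; [lra | exfalso; eauto].
Qed.

Lemma trav_step_bounds (a b : nat * nat) :
  trav_step a b ->
  (fst a <= fst b <= S (fst a))%nat /\ (snd a <= snd b)%nat.
Proof.
  destruct a as [i j], b as [i' j']; simpl. intros [Hi [Hj _]]. lia.
Qed.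

Lemma trav_base : is_traversal 1 1 [origin].
Proof.
  repeat split; try discriminate. intros u Hu; simpl in Hu; lia.
Qed.

Lemma trav_snoc (m k : nat) (t : list (nat * nat)) (a b : nat) :
  is_traversal m k t -> trav_step ((m - 1)%nat, (k - 1)%nat) (a, b) ->
  is_traversal (S a) (S b) (t ++ [(a, b)]).
Proof.
  intros [Hne [H0 [Hlast Hstep]]] Hab.
  assert (Hlen : (0 < length t)%nat) by (destruct t; [congruence | simpl; lia]).
  split; [|split; [|split]].
  - destruct t; simpl; congruence.
  - rewrite app_nth1 by lia. exact H0.
  - rewrite length_app; simpl.
    replace (length t + 1 - 1)%nat with (length t) by lia.
    rewrite nth_middle. f_equal; lia.
  - intros u Hu. rewrite length_app in Hu; simpl in Hu.
    destruct (Nat.lt_ge_cases (S u) (length t)).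
    + rewrite !app_nth1 by lia. apply Hstep; lia.
    + replace u with (length t - 1)%nat in * by lia.
      rewrite app_nth1, Hlast by lia.
      replace (S (length t - 1)) with (length t) by lia.
      rewrite nth_middle. exact Hab.
Qed.

(* Any two nonempty curves admit a traversal (first along p, then along q). *)
Lemma trav_exists (a b : nat) : exists t, is_traversal (S a) (S b) t.
Proof.
  assert (Hrow : forall b, exists t, is_traversal 1 (S b) t).
  { induction b0 as [|b0 [t Ht]]; [exists [origin]; apply trav_base|].
    exists (t ++ [(0%nat, S b0)]). apply (trav_snoc 1 (S b0)); auto.
    simpl; rewrite Nat.sub_0_r. repeat split; auto. intro E; injection E; lia. }
  induction a as [|a [t Ht]]; [apply Hrow|].
  exists (t ++ [(S a, b)]). apply (trav_snoc (S a) (S b)); auto.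
  simpl; rewrite !Nat.sub_0_r. repeat split; auto. intro E; injection E; lia.
Qed.

Lemma trav_diag (n : nat) :
  is_traversal (S n) (S n) (map (fun i => (i, i)) (seq 0 (S n))).
Proof.
  induction n as [|n IH]; [apply trav_base|].
  rewrite seq_S, map_app; simpl (map _ [_]).
  apply (trav_snoc (S n) (S n)); auto.
  simpl; rewrite Nat.sub_0_r. repeat split; auto. intro E; injection E; lia.
Qed.

Lemma trav_mono (m k : nat) (t : list (nat * nat)) :
  is_traversal m k t -> forall u d, (u + d < length t)%nat ->
  (fst (nth u t origin) <= fst (nth (u + d) t origin))%nat /\
  (snd (nth u t origin) <= snd (nth (u + d) t origin))%nat.
Proof.
  intros [_ [_ [_ Hstep]]] u d. induction d as [|d IH]; intros Hd.
  - rewrite Nat.add_0_r; lia.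
  - destruct (IH ltac:(lia)) as [IH1 IH2].
    destruct (trav_step_bounds _ _ (Hstep (u + d)%nat ltac:(lia))) as [S1 S2].
    replace (u + S d)%nat with (S (u + d)) by lia. lia.
Qed.

(* Since the first coordinate grows by steps of at most one, a traversal
   visits every row index below one it has already reached. *)
Lemma trav_fst_reach (m k : nat) (t : list (nat * nat)) :
  is_traversal m k t -> forall u, (u < length t)%nat ->
  forall i, (i <= fst (nth u t origin))%nat ->
  exists u', (u' <= u)%nat /\ fst (nth u' t origin) = i.
Proof.
  intros [_ [H0 [_ Hstep]]]. induction u as [|u IH]; intros Hu i Hi.
  - exists 0%nat. rewrite H0 in Hi |- *. simpl in *. split; lia.
  - destruct (trav_step_bounds _ _ (Hstep u Hu)) as [S1 _].
    destruct (Nat.le_gt_cases i (fst (nth u t origin))) as [Hle | Hgt].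
    + destruct (IH ltac:(lia) i Hle) as [u' [? ?]]. exists u'; split; [lia | auto].
    + exists (S u); split; [lia | lia].
Qed.

Definition swap_pair (ij : nat * nat) : nat * nat := (snd ij, fst ij).

Lemma trav_swap (m k : nat) (t : list (nat * nat)) :
  is_traversal m k t -> is_traversal k m (map swap_pair t).
Proof.
  intros [Hne [H0 [Hlast Hstep]]].
  assert (Hn : forall u, nth u (map swap_pair t) origin = swap_pair (nth u t origin))
    by (intro u; exact (map_nth swap_pair t origin u)).
  split; [|split; [|split]].
  - destruct t; simpl; congruence.
  - rewrite Hn, H0; reflexivity.
  - rewrite length_map, Hn, Hlast; reflexivity.
  - intros u Hu. rewrite length_map in Hu. rewrite !Hn.
    generalize (Hstep u Hu).
    destruct (nth u t origin) as [a b], (nth (S u) t origin) as [c d]; simpl.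
    intros [H1 [H2 H3]]. repeat split; auto.
    intro E; apply H3; injection E; intros; subst; reflexivity.
Qed.

Section Frechet.

Variable M : MetricSpace.
Implicit Types p q r : list M.

(* All values [pair_dist p q] can take: traversal costs lie in this finite
   list, which is why the minimal cost defining [dF] exists. *)
Definition pair_values p q : list R :=
  0 :: flat_map (fun x => map (Defs.dist M x) q) p.

Lemma pair_dist_in p q (ij : nat * nat) : In (pair_dist p q ij) (pair_values p q).
Proof.
  unfold pair_dist, pair_values.
  destruct (nth_error p (fst ij)) as [x|] eqn:Ex; [|left; reflexivity].
  destruct (nth_error q (snd ij)) as [y|] eqn:Ey; [|left; reflexivity].
  right. apply in_flat_map. exists x.
  split; [eapply nth_error_In; eauto | apply in_map; eapply nth_error_In; eauto].
Qed.

Lemma trav_cost_in p q (t : list (nat * nat)) : In (trav_cost p q t) (pair_values p q).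
Proof.
  apply fold_Rmax_in; [left; reflexivity|].
  intros z Hz. apply in_map_iff in Hz. destruct Hz as [ij [<- _]]. apply pair_dist_in.
Qed.

Lemma dF_spec p q : p <> [] -> q <> [] -> is_dF p q (dF p q).
Proof.
  intros Hp Hq. unfold dF. apply epsilon_spec.
  destruct p as [|x p']; [congruence|]. destruct q as [|y q']; [congruence|].
  destruct (trav_exists (length p') (length q')) as [t0 Ht0].
  set (is_cost := fun v => exists t,
         is_traversal (length (x :: p')) (length (y :: q')) t /\
         trav_cost (x :: p') (y :: q') t = v).
  destruct (list_min (pair_values (x :: p') (y :: q')) is_cost)
    as [v [[t [Ht Hc]] Hmin]].
  - exists (trav_cost (x :: p') (y :: q') t0).
    split; [apply trav_cost_in | exists t0; auto].
  - exists v. split; [exists t; auto|].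
    intros t' Ht'. apply Hmin; [apply trav_cost_in | exists t'; auto].
Qed.

Lemma dF_nonneg p q : p <> [] -> q <> [] -> 0 <= dF p q.
Proof.
  intros Hp Hq. destruct (dF_spec p q Hp Hq) as [[t [_ <-]] _].
  apply fold_Rmax_nonneg.
Qed.

Lemma trav_cost_swap p q (t : list (nat * nat)) :
  trav_cost q p (map swap_pair t) = trav_cost p q t.
Proof.
  unfold trav_cost. rewrite map_map. f_equal. apply map_ext. intros [i j].
  unfold pair_dist, swap_pair; simpl.
  destruct (nth_error p i), (nth_error q j); auto. apply Defs.dist_sym.
Qed.

Lemma dF_sym p q : p <> [] -> q <> [] -> dF p q = dF q p.
Proof.
  intros Hp Hq.
  destruct (dF_spec p q Hp Hq) as [[t1 [Ht1 Hc1]] Hmin1].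
  destruct (dF_spec q p Hq Hp) as [[t2 [Ht2 Hc2]] Hmin2].
  apply Rle_antisym.
  - rewrite <- Hc2, <- trav_cost_swap. apply Hmin1, trav_swap, Ht2.
  - rewrite <- Hc1, <- trav_cost_swap. apply Hmin2, trav_swap, Ht1.
Qed.

(* Every vertex of p is within [dF p q] of some vertex of q: an optimal
   traversal visits it together with some vertex of q. *)
Lemma dF_vertex_near p q : p <> [] -> q <> [] ->
  forall y, In y p -> exists z, In z q /\ Defs.dist M y z <= dF p q.
Proof.
  intros Hp Hq y Hy.
  destruct (dF_spec p q Hp Hq) as [[t [Ht Hc]] _].
  destruct (In_nth_error p y Hy) as [i Hi].
  assert (Hip : (i < length p)%nat) by (apply nth_error_Some; congruence).
  pose proof Ht as [Hne [_ [Hlast _]]].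
  assert (Hlen : (0 < length t)%nat) by (destruct t; [congruence | simpl; lia]).
  destruct (trav_fst_reach _ _ _ Ht (length t - 1) ltac:(lia) i)
    as [u [Hu Hrow]]; [rewrite Hlast; simpl; lia|].
  destruct (trav_mono _ _ _ Ht u (length t - 1 - u) ltac:(lia)) as [_ Hcol].
  replace (u + (length t - 1 - u))%nat with (length t - 1)%nat in Hcol by lia.
  rewrite Hlast in Hcol; simpl in Hcol.
  destruct (nth_error q (snd (nth u t origin))) as [z|] eqn:Ez;
    [| apply nth_error_None in Ez; destruct q; [congruence | simpl in *; lia]].
  exists z. split; [eapply nth_error_In; eauto|].
  rewrite <- Hc. unfold trav_cost.
  replace (Defs.dist M y z) with (pair_dist p q (nth u t origin))
    by (unfold pair_dist; rewrite Hrow, Hi, Ez; reflexivity).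
  apply fold_Rmax_ge, in_map, nth_In; lia.
Qed.

Lemma dF_vertex_near_chain p q r : p <> [] -> q <> [] -> r <> [] ->
  forall y, In y p -> exists x, In x r /\ Defs.dist M x y <= dF p q + dF q r.
Proof.
  intros Hp Hq Hr y Hy.
  destruct (dF_vertex_near p q Hp Hq y Hy) as [z [Hz Hyz]].
  destruct (dF_vertex_near q r Hq Hr z Hz) as [x [Hx Hzx]].
  exists x. split; auto.
  eapply Rle_trans; [apply (Defs.dist_tri M x z y)|].
  rewrite (Defs.dist_sym M x z), (Defs.dist_sym M z y). lra.
Qed.

Lemma Forall2_nth_error {A B : Type} (P : A -> B -> Prop) l1 l2 i a b :
  Forall2 P l1 l2 -> nth_error l1 i = Some a -> nth_error l2 i = Some b -> P a b.
Proof.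
  intros H. revert i. induction H as [|x y l1 l2 Hxy _ IH]; intros [|i];
    simpl; try discriminate; [|apply IH].
  intros [= <-] [= <-]. exact Hxy.
Qed.

(* Two curves whose corresponding vertices are pairwise within [delta] are
   within Frechet distance [delta] (use the diagonal traversal). *)
Lemma dF_le_vertexwise q r (delta : R) : q <> [] -> 0 <= delta ->
  Forall2 (fun y z => Defs.dist M z y <= delta) q r -> dF q r <= delta.
Proof.
  intros Hq Hd Hqr.
  pose proof (Forall2_length Hqr) as Hlen.
  destruct q as [|y0 q']; [congruence|].
  assert (Hr : r <> []) by (destruct r; simpl in Hlen; congruence).
  destruct (dF_spec (y0 :: q') r Hq Hr) as [_ Hmin].
  eapply Rle_trans; [apply Hmin; rewrite <- Hlen; apply trav_diag|].
  apply fold_Rmax_le; auto. intros x Hx.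
  apply in_map_iff in Hx. destruct Hx as [ij [<- Hij]].
  apply in_map_iff in Hij. destruct Hij as [i [<- Hi]]. apply in_seq in Hi.
  unfold pair_dist; simpl fst; simpl snd.
  destruct (nth_error (y0 :: q') i) as [y|] eqn:Ey; [|lra].
  destruct (nth_error r i) as [z|] eqn:Ez; [|lra].
  rewrite Defs.dist_sym. exact (Forall2_nth_error _ _ _ _ _ _ Hqr Ey Ez).
Qed.

End Frechet.

Section Doubling.

Variable M : MetricSpace.
Variable lam : nat.
Hypothesis doubling : doubling_cover M lam.

Lemma doubling_cover_pos (x : M) : (1 <= lam)%nat.
Proof.
  destruct (doubling x 1 ltac:(lra)) as [C [HC Hcov]].
  destruct (Hcov x) as [c [Hc _]]; [rewrite Defs.dist_refl; lra|].
  destruct C; [destruct Hc | simpl in HC; lia].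
Qed.

Lemma halve_balls (D : list M) (rho : R) : 0 < rho ->
  exists E, (length E <= lam * length D)%nat /\
    forall c y, In c D -> Defs.dist M c y <= rho ->
    exists e, In e E /\ Defs.dist M e y <= rho / 2.
Proof.
  intros Hrho. induction D as [|c D IH].
  - exists []. split; [simpl; lia | intros c y []].
  - destruct IH as [E [HE Hcov]]. destruct (doubling c rho Hrho) as [C [HC HCcov]].
    exists (C ++ E). split; [rewrite length_app; simpl; nia|].
    intros c' y [<- | Hc'] Hy.
    + destruct (HCcov y Hy) as [e [He Hey]]. exists e; split; auto. apply in_or_app; auto.
    + destruct (Hcov c' y Hc' Hy) as [e [He Hey]]. exists e; split; auto. apply in_or_app; auto.
Qed.

Lemma shrink_balls (n : nat) (xs : list M) (rho : R) : 0 < rho ->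
  exists D, (length D <= length xs * lam ^ n)%nat /\
    forall x y, In x xs -> Defs.dist M x y <= rho ->
    exists c, In c D /\ Defs.dist M c y <= rho / 2 ^ n.
Proof.
  intros Hrho. induction n as [|n IH].
  - exists xs. split; [simpl; lia|]. intros x y Hx Hy. exists x; split; auto. simpl; lra.
  - destruct IH as [D [HD Hcov]].
    assert (H2n : 0 < 2 ^ n) by (apply pow_lt; lra).
    destruct (halve_balls D (rho / 2 ^ n)) as [E [HE HEcov]];
      [apply Rdiv_lt_0_compat; auto|].
    exists E. split; [simpl; nia|].
    intros x y Hx Hy. destruct (Hcov x y Hx Hy) as [c [Hc Hcy]].
    destruct (HEcov c y Hc Hcy) as [e [He Hey]]. exists e; split; auto.
    simpl. replace (rho / (2 * 2 ^ n)) with (rho / 2 ^ n / 2) by (field; lra). auto.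
Qed.

Lemma multiscale_net (n : nat) (xs : list M) (rho : nat -> R) (N : nat) :
  (forall i, 0 < rho i) ->
  exists Q, (length Q <= S N * (length xs * lam ^ n))%nat /\
    forall i x y, (i <= N)%nat -> In x xs -> Defs.dist M x y <= rho i ->
    exists c, In c Q /\ Defs.dist M c y <= rho i / 2 ^ n.
Proof.
  intros Hrho. induction N as [|N IH].
  - destruct (shrink_balls n xs (rho 0%nat) (Hrho 0%nat)) as [D [HD Hcov]].
    exists D. split; [lia|].
    intros i x y Hi. replace i with 0%nat by lia. apply Hcov.
  - destruct IH as [Q [HQ HQcov]].
    destruct (shrink_balls n xs (rho (S N)) (Hrho (S N))) as [D [HD HDcov]].
    exists (D ++ Q). split; [rewrite length_app; simpl; lia|].
    intros i x y Hi Hx Hy. destruct (Nat.eq_dec i (S N)) as [-> | Hne].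
    + destruct (HDcov x y Hx Hy) as [c [Hc Hcy]]. exists c; split; auto. apply in_or_app; auto.
    + destruct (HQcov i x y ltac:(lia) Hx Hy) as [c [Hc Hcy]].
      exists c; split; auto. apply in_or_app; auto.
Qed.

End Doubling.

Lemma dyadic_band (s0 r : R) (N : nat) : 0 < s0 -> s0 <= r -> r <= 2 ^ N * s0 ->
  exists i, (i <= N)%nat /\ 2 ^ i * s0 <= r /\ r <= 2 ^ S i * s0.
Proof.
  intros Hs0. induction N as [|N IH]; intros Hlo Hhi.
  - exists 0%nat. simpl in *. split; [lia | lra].
  - destruct (Rle_dec r (2 ^ N * s0)) as [Hle | Hgt].
    + destruct (IH Hlo Hle) as [i [Hi Hr]]. exists i; split; [lia | auto].
    + exists N. split; [lia | split; [lra | auto]].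
Qed.

(* Think of dS as the distance of X to its
   simplification with vertices xs.  Points y within r + dS of xs, for any
   r in [dS / alpha, dS / eps], are approximated to within eps * r by a net
   of |xs| + (N + 1) |xs| lam^n points built at the dyadic scales between
   dS / alpha and dS / eps (plus xs itself for the degenerate case dS = 0). *)
Lemma simplification_net (M : MetricSpace) (lam : nat) :
  doubling_cover M lam ->
  forall (alpha eps dS : R) (xs : list M) (N n : nat),
  0 < alpha -> 0 < eps -> 0 <= dS ->
  alpha / eps <= 2 ^ N -> 2 * (1 + alpha) / eps <= 2 ^ n ->
  exists P : list M, (length P <= length xs + S N * (length xs * lam ^ n))%nat /\
    forall (y : M) (r : R), dS <= alpha * r -> r <= dS / eps ->
    (exists x, In x xs /\ Defs.dist M x y <= r + dS) ->
    exists p, In p P /\ Defs.dist M p y <= eps * r.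
Proof.
  intros doubling alpha eps dS xs N n Halpha Heps HdS HN Hn.
  destruct (Rle_lt_or_eq_dec _ _ HdS) as [HdS_pos | <-].
  2:{ exists xs. split; [lia|].
      intros y r Hlo Hhi [x [Hx Hxy]]. exists x; split; auto.
      unfold Rdiv in Hhi; rewrite Rmult_0_l in Hhi.
      assert (r = 0) by nra. subst r; lra. }
  set (s0 := dS / alpha).
  assert (Hs0 : 0 < s0) by (apply Rdiv_lt_0_compat; lra).
  set (rho := fun i : nat => (1 + alpha) * (2 ^ S i * s0)).
  assert (Hrho : forall i, 0 < rho i).
  { intros i. unfold rho.
    apply Rmult_lt_0_compat; [lra | apply Rmult_lt_0_compat; [apply pow_lt; lra | exact Hs0]]. }
  destruct (multiscale_net M lam doubling n xs rho N Hrho) as [Q [HQ HQcov]].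
  exists Q. split; [lia|].
  intros y r Hlo Hhi [x [Hx Hxy]].
  assert (Hr_lo : s0 <= r).
  { unfold s0. apply (Rmult_le_reg_r alpha); [lra|].
    unfold Rdiv; rewrite Rmult_assoc, Rinv_l; lra. }
  assert (Hr_hi : r <= 2 ^ N * s0).
  { eapply Rle_trans; [exact Hhi|].
    replace (dS / eps) with (alpha / eps * s0) by (unfold s0; field; lra).
    apply Rmult_le_compat_r; lra. }
  destruct (dyadic_band s0 r N Hs0 Hr_lo Hr_hi) as [i [Hi [Hband_lo Hband_hi]]].
  assert (Hball : Defs.dist M x y <= rho i).
  { unfold rho. apply Rle_trans with ((1 + alpha) * r); [nra|].
    apply Rmult_le_compat_l; lra. }
  destruct (HQcov i x y Hi Hx Hball) as [c [Hc Hcy]].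
  exists c. split; auto. eapply Rle_trans; [exact Hcy|].
  (* rho i / 2^n = 2 (1 + alpha) / 2^n * 2^i s0 <= eps * 2^i s0 <= eps * r *)
  assert (H2n : 0 < 2 ^ n) by (apply pow_lt; lra).
  assert (Hgain : 2 * (1 + alpha) <= eps * 2 ^ n).
  { apply (Rmult_le_reg_r (/ eps)); [apply Rinv_0_lt_compat; lra|].
    replace (eps * 2 ^ n * / eps) with (2 ^ n) by (field; lra). exact Hn. }
  unfold rho. simpl (2 ^ S i).
  set (T := 2 ^ i * s0) in *.
  replace ((1 + alpha) * (2 * 2 ^ i * s0) / 2 ^ n)
    with (2 * (1 + alpha) * T / 2 ^ n) by (unfold T; field; lra).
  apply (Rmult_le_reg_r (2 ^ n)); auto.
  replace (2 * (1 + alpha) * T / 2 ^ n * 2 ^ n) with (2 * (1 + alpha) * T)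
    by (field; lra).
  assert (0 < T) by (apply Rmult_lt_0_compat; [apply pow_lt; lra | exact Hs0]).
  nra.
Qed.

Fixpoint words {A : Type} (P : list A) (k : nat) : list (list A) :=
  match k with
  | O => [[]]
  | S k' => flat_map (fun x => map (cons x) (words P k')) P
  end.

Lemma words_length {A : Type} (P : list A) (k : nat) :
  length (words P k) = (length P ^ k)%nat.
Proof.
  induction k as [|k IH]; simpl; auto.
  rewrite <- IH. generalize P at 2 3 as l.
  induction l as [|x l IHl]; simpl; auto.
  rewrite length_app, length_map, IHl. reflexivity.
Qed.

Lemma words_size {A : Type} (P : list A) (k : nat) (Y : list A) :
  In Y (words P k) -> length Y = k.
Proof.
  revert Y; induction k as [|k IH]; simpl; intros Y HY.
  - destruct HY as [<- | []]; reflexivity.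
  - apply in_flat_map in HY. destruct HY as [x [_ Hx]].
    apply in_map_iff in Hx. destruct Hx as [Y' [<- HY']]. simpl; f_equal; auto.
Qed.

Lemma words_complete {A : Type} (P Y : list A) :
  incl Y P -> In Y (words P (length Y)).
Proof.
  induction Y as [|a Y IH]; simpl; intros HY; [left; reflexivity|].
  apply in_flat_map. exists a. split; [apply HY; left; reflexivity|].
  apply in_map, IH. intros z Hz; apply HY; right; exact Hz.
Qed.

(* Without decidable equality, duplicates are removed classically. *)
Lemma dedup_exists {A : Type} (l : list A) :
  exists l', NoDup l' /\ incl l l' /\ incl l' l /\ (length l' <= length l)%nat.
Proof.
  induction l as [|a l [l' [Hnd [Hsub [Hsup Hlen]]]]].
  - exists []. repeat split; try constructor; intros x [].
  - destruct (classic (In a l')) as [Ha | Ha].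
    + exists l'. repeat split; auto.
      * intros x [<- | Hx]; auto.
      * intros x Hx; right; auto.
      * simpl; lia.
    + exists (a :: l'). repeat split.
      * constructor; auto.
      * intros x [<- | Hx]; [left | right]; auto.
      * intros x [<- | Hx]; [left | right]; auto.
      * simpl; lia.
Qed.

Lemma snap_vertices {A : Type} (close : A -> A -> Prop) (P q : list A) :
  (forall y, In y q -> exists p, In p P /\ close p y) ->
  exists Xb, Forall2 (fun y z => close z y) q Xb /\ incl Xb P.
Proof.
  induction q as [|y q IH]; intros Hq.
  - exists []. split; [constructor | intros z []].
  - destruct (Hq y (or_introl eq_refl)) as [p [Hp Hpy]].
    destruct IH as [Xb [Hclose HXb]]; [intros y' Hy'; apply Hq; right; exact Hy'|].
    exists (p :: Xb). split; [constructor; auto|].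
    intros z [<- | Hz]; auto.
Qed.

Lemma candidate_curves (M : MetricSpace) (P : list M) (k : nat) :
  exists C : list (list M),
    NoDup C /\ (forall Y, In Y C -> length Y = k) /\ (length C <= length P ^ k)%nat /\
    forall (q : list M) (delta : R), length q = k -> q <> [] -> 0 <= delta ->
      (forall y, In y q -> exists p, In p P /\ Defs.dist M p y <= delta) ->
      exists Xb, In Xb C /\ dF q Xb <= delta.
Proof.
  destruct (dedup_exists (words P k)) as [C [Hnd [Hsub [Hsup Hlen]]]].
  exists C. split; [exact Hnd|]. split; [intros Y HY; exact (words_size P k Y (Hsup Y HY))|].
  split; [rewrite <- words_length; exact Hlen|].
  intros q delta Hq Hqne Hdelta Hnear.
  destruct (snap_vertices (fun p y => Defs.dist M p y <= delta) P q Hnear)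
    as [Xb [Hclose HXb]].
  exists Xb. split; [| exact (dF_le_vertexwise M q Xb delta Hqne Hdelta Hclose)].
  apply Hsub. rewrite <- Hq, (Forall2_length Hclose). apply words_complete, HXb.
Qed.

Lemma ln2_pos : 0 < ln 2.
Proof. rewrite <- ln_1; apply ln_increasing; lra. Qed.

Lemma log2_le (x y : R) : 0 < x -> x <= y -> log2 x <= log2 y.
Proof.
  intros Hx Hxy. unfold log2, Rdiv. apply Rmult_le_compat_r.
  - left; apply Rinv_0_lt_compat, ln2_pos.
  - destruct (Rle_lt_or_eq_dec _ _ Hxy) as [Hlt | <-]; [left; apply ln_increasing|]; lra.
Qed.

Lemma log2_double (x : R) : 0 < x -> log2 (2 * x) = log2 x + 1.
Proof.
  intros Hx. pose proof ln2_pos. unfold log2. rewrite ln_mult by lra. field; lra.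
Qed.

Lemma log2_pow2 (n : nat) : log2 (2 ^ n) = INR n.
Proof.
  pose proof ln2_pos. unfold log2. rewrite ln_pow by lra. field; lra.
Qed.

(* lam^n = (2^n)^(log2 lam): the doubling dimension converts a number of
   halvings into a power of the scale ratio. *)
Lemma pow_as_Rpower (lam : R) (n : nat) : 0 < lam ->
  lam ^ n = Rpower (2 ^ n) (log2 lam).
Proof.
  intros Hlam. pose proof ln2_pos.
  rewrite <- (Rpower_pow n 2), Rpower_mult, <- Rpower_pow by lra.
  unfold Rpower, log2. f_equal. field; lra.
Qed.

Lemma pow2_bracket (x : R) : 1 <= x -> exists n : nat, x <= 2 ^ n < 2 * x.
Proof.
  intros Hx.
  assert (Hbracket : forall N, x <= 2 ^ N -> exists n, x <= 2 ^ n < 2 * x).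
  { induction N as [|N IH]; intros HN.
    - exists 0%nat. simpl in *. lra.
    - destruct (Rle_lt_dec x (2 ^ N)) as [Hle | Hgt]; [exact (IH Hle)|].
      exists (S N). simpl in *. lra. }
  destruct (Pow_x_infinity 2 ltac:(rewrite Rabs_pos_eq; lra) x) as [N HN].
  apply (Hbracket N). specialize (HN N (le_n N)).
  rewrite Rabs_pos_eq in HN; [lra | apply pow_le; lra].
Qed.

(* The size of the point set: with A = alpha / eps, N ~ log2 A scales and
   n ~ log2 (6 A) halvings, k + (N + 1) k lam^n <= c k log2 A A^(log2 lam). *)
Lemma count_bound (k N n lam : nat) (A : R) :
  (1 <= k)%nat -> (1 <= lam)%nat -> 2 < A -> 2 ^ N < 2 * A -> 2 ^ n <= 6 * A ->
  INR (k + S N * (k * lam ^ n)) <=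
    4 * Rpower 6 (log2 (INR lam)) * INR k * log2 A * Rpower A (log2 (INR lam)).
Proof.
  intros Hk Hlam HA HN Hn.
  apply le_INR in Hk, Hlam. simpl in Hk, Hlam.
  rewrite plus_INR, mult_INR, mult_INR, pow_INR, S_INR.
  set (W := Rpower 6 (log2 (INR lam)) * Rpower A (log2 (INR lam))).
  assert (Hlog_lam : 0 <= log2 (INR lam)).
  { replace 0 with (log2 1) by (unfold log2; rewrite ln_1; field; apply Rgt_not_eq, ln2_pos).
    apply log2_le; lra. }
  assert (HW : INR lam ^ n <= W).
  { unfold W. rewrite Rpower_mult_distr, pow_as_Rpower by lra.
    apply Rle_Rpower_l; [exact Hlog_lam | split; [apply pow_lt | ]; lra]. }
  assert (Hpow1 : 1 <= INR lam ^ n) by (rewrite <- (pow1 n); apply pow_incr; lra).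
  assert (HNlog : INR N <= log2 A + 1)
    by (rewrite <- log2_pow2, <- log2_double by lra; apply log2_le; [apply pow_lt|]; lra).
  assert (HL : 1 < log2 A).
  { pose proof ln2_pos. unfold log2. apply (Rmult_lt_reg_r (ln 2)); [lra|].
    replace (ln A / ln 2 * ln 2) with (ln A) by (field; lra).
    rewrite Rmult_1_l. apply ln_increasing; lra. }
  assert (HN0 : 0 <= INR N) by apply pos_INR.
  (* k + (N + 1) k lam^n <= (N + 2) k W <= (log2 A + 3) k W <= 4 k log2 A W *)
  set (L := log2 A) in *. set (Lam := INR lam ^ n) in *. set (K := INR k) in *.
  assert (K <= K * Lam) by nra.
  assert (K * Lam <= K * W) by nra.
  assert ((INR N + 2) * (K * Lam) <= (L + 3) * (K * W)) by (apply Rmult_le_compat; nra).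
  replace (4 * Rpower 6 (log2 (INR lam)) * K * L * Rpower A (log2 (INR lam)))
    with (4 * K * L * W) by (unfold W; ring).
  assert ((L + 3) * (K * W) <= 4 * L * (K * W)) by nra.
  nra.
Qed.

Theorem mainTheorem5 :
  forall lam : nat,
  exists c : R, 0 < c /\
  forall (M : MetricSpace), doubling_constant M lam ->
  forall (alpha eps : R) (k m : nat) (X Xk : list M),
    2 <= alpha -> 0 < eps < 1 -> (1 <= k)%nat -> (1 <= m)%nat ->
    length X = m ->
    approx_simplification alpha k X Xk ->
    exists C : list (list M),
      NoDup C /\
      (forall Y, In Y C -> length Y = k) /\
      INR (length C) <=
        (c * INR k * log2 (alpha / eps) *
           Rpower (alpha / eps) (log2 (INR lam))) ^ k /\
      forall q : list M, length q = k ->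
        eps * dF X Xk <= dF q X <= / eps * dF X Xk ->
        exists Xb, In Xb C /\ dF q Xb <= eps * dF q X.
Proof.
  intros lam. exists (4 * Rpower 6 (log2 (INR lam))).
  split; [apply Rmult_lt_0_compat; [lra | apply exp_pos]|].
  intros M [doubling _] alpha eps k m X Xk Halpha Heps Hk Hm HX [HXk Happrox].
  assert (HXne : X <> []) by (destruct X; simpl in HX; [lia | discriminate]).
  assert (HXkne : Xk <> []) by (destruct Xk; simpl in HXk; [lia | discriminate]).
  set (dS := dF X Xk).
  (* Number of dyadic scales N ~ log2 (alpha / eps) and of halvings
     n ~ log2 (2 (1 + alpha) / eps) <= log2 (6 alpha / eps). *)
  set (A := alpha / eps).
  set (B := 2 * (1 + alpha) / eps).
  assert (HA : A * eps = alpha) by (unfold A; field; lra).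
  assert (HB : B * eps = 2 * (1 + alpha)) by (unfold B; field; lra).
  destruct (pow2_bracket A) as [N HN]; [nra|].
  destruct (pow2_bracket B) as [n Hn]; [nra|].
  destruct (simplification_net M lam doubling alpha eps dS Xk N n)
    as [P [HPlen HPnet]]; [lra | lra | apply dF_nonneg; auto | apply HN | apply Hn |].
  destruct (candidate_curves M P k) as [C [Hnd [HClen [HCsize HCsnap]]]].
  exists C. split; [exact Hnd|]. split; [exact HClen|]. split.
  - (* |C| <= |P|^k and |P| <= k + (N + 1) k lam^n *)
    eapply Rle_trans; [apply le_INR, HCsize|]. rewrite pow_INR.
    apply pow_incr. split; [apply pos_INR|].
    eapply Rle_trans; [apply le_INR, HPlen|]. rewrite HXk.
    destruct Xk as [|x0 Xk']; [congruence|].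
    apply count_bound; try nra; [exact Hk | exact (doubling_cover_pos M lam doubling x0)].
  - (* every vertex of q is close to Xk, hence to the net P *)
    intros q Hq [_ Hhi].
    assert (Hqne : q <> []) by (destruct q; simpl in Hq; [lia | discriminate]).
    apply HCsnap; auto; [pose proof (dF_nonneg M q X Hqne HXne); nra|].
    intros y Hy. apply HPnet.
    + rewrite <- (dF_sym M X q) by auto. apply Happrox; auto.
    + unfold Rdiv. rewrite Rmult_comm. exact Hhi.
    + exact (dF_vertex_near_chain M q X Xk Hqne HXne HXkne y Hy).
Qed.
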